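(* Let $k$ be a positive integer. The clique number of $\mathcal F_k$ is $2$ if $k$ is even and $3$ if $k$ is odd.
   Context: The vertex set $V$ consists of all reduced fractions $p/q$ with $p,q\in\mathbb Z$, $\gcd(p,q)=1$, together with $1/0$; here $p/q$ and $(-p)/(-q)$ denote the same vertex. For vertices define $d(p/q,a/b)=|pb-qa|$. The graph $\mathcal F_k$ has vertex set $V$, with an edge between $p/q$ and $a/b$ exactly when $d(p/q,a/b)=k$. *)

From Stdlib Require Import ZArith List.
Open Scope Z_scope.

(* A vertex p/q is represented by a pair (p,q) of integers with gcd(p,q)=1;
   this includes 1/0 (and its representative (-1,0)). *)
Definition vertex (v : Z * Z) : Prop := Z.gcd (fst v) (snd v) = 1.

Definition same_vertex (v w : Z * Z) : Prop :=
  v = w \/ (fst v = - fst w /\ snd v = - snd w).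

Definition dist (v w : Z * Z) : Z :=
  Z.abs (fst v * snd w - snd v * fst w).

Definition adjF (k : Z) (v w : Z * Z) : Prop :=
  vertex v /\ vertex w /\ ~ same_vertex v w /\ dist v w = k.

Definition is_clique (k : Z) (l : list (Z * Z)) : Prop :=
  Forall vertex l /\ ForallOrdPairs (adjF k) l.

Definition clique_number (k : Z) (w : nat) : Prop :=
  (exists l, is_clique k l /\ length l = w) /\
  (forall l, is_clique k l -> (length l <= w)%nat).

(* Writing det(u, v) = u1 v2 - u2 v1, so that d(u, v) = |det(u, v)|, the
   identity det(u,v) w = det(u,w) v - det(v,w) u shows that three vertices at
   pairwise distance k > 0 satisfy w = a u + b v with a, b = ±1.
   For k even, det(u,v) is even, so the primitive vectors u and v agree mod 2
   and w = ±u ± v is divisible by 2, which a vertex is not: no triangle.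
   For any k, a fourth vertex x = c u + d v would give
   |det(w,x)| = |ad - bc| k with |ad - bc| in {0, 2}, never k: no K4.
   The cliques {1/0, 1/k} and, for k odd, {1/0, 1/k, 2/k} attain the bounds. *)

From Stdlib Require Import ZArith List Lia Bool.
Import ListNotations.
Open Scope Z_scope.

Definition det (u v : Z * Z) : Z := fst u * snd v - snd u * fst v.

Lemma dist_det u v : dist u v = Z.abs (det u v).
Proof. reflexivity. Qed.

Lemma det_cramer_fst u v w :
  det u v * fst w = det u w * fst v - det v w * fst u.
Proof. unfold det; ring. Qed.

Lemma det_cramer_snd u v w :
  det u v * snd w = det u w * snd v - det v w * snd u.
Proof. unfold det; ring. Qed.

Lemma abs_eq_sign_mul x k : 0 < k -> Z.abs x = k ->
  exists e, Z.abs e = 1 /\ x = e * k.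
Proof.
  intros Hk Hx; destruct (Z.abs_spec x) as [[_ E] | [_ E]].
  - exists 1; lia.
  - exists (-1); lia.
Qed.

Lemma equidistant_triple k u v w : 0 < k ->
  dist u v = k -> dist u w = k -> dist v w = k ->
  exists a b, Z.abs a = 1 /\ Z.abs b = 1 /\
    fst w = a * fst u + b * fst v /\ snd w = a * snd u + b * snd v.
Proof.
  rewrite !dist_det; intros Hk Huv Huw Hvw.
  destruct (abs_eq_sign_mul _ _ Hk Huv) as (e1 & He1 & E1).
  destruct (abs_eq_sign_mul _ _ Hk Huw) as (e2 & He2 & E2).
  destruct (abs_eq_sign_mul _ _ Hk Hvw) as (e3 & He3 & E3).
  assert (cancel_k : forall y z, k * y = k * z -> y = z)
    by (intros y z; apply Z.mul_reg_l; lia).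
  assert (W1 : e1 * fst w = e2 * fst v - e3 * fst u).
  { apply cancel_k; rewrite Z.mul_assoc, (Z.mul_comm k e1), <- E1,
      det_cramer_fst, E2, E3; ring. }
  assert (W2 : e1 * snd w = e2 * snd v - e3 * snd u).
  { apply cancel_k; rewrite Z.mul_assoc, (Z.mul_comm k e1), <- E1,
      det_cramer_snd, E2, E3; ring. }
  exists (- e1 * e3), (e1 * e2).
  assert (e1 = 1 \/ e1 = -1) as [-> | ->] by lia;
    assert (e2 = 1 \/ e2 = -1) as [-> | ->] by lia;
    assert (e3 = 1 \/ e3 = -1) as [-> | ->] by lia; lia.
Qed.

Lemma vertex_not_both_even v :
  vertex v -> Z.even (fst v) = false \/ Z.even (snd v) = false.
Proof.
  unfold vertex; intros Hv.
  destruct (Z.even (fst v)) eqn:E1, (Z.even (snd v)) eqn:E2; auto.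
  apply Z.even_spec in E1 as [m Hm]; apply Z.even_spec in E2 as [n Hn].
  assert (H2 : (2 | Z.gcd (fst v) (snd v)))
    by (apply Z.gcd_greatest; [exists m | exists n]; lia).
  rewrite Hv in H2; apply Z.divide_pos_le in H2; lia.
Qed.

Lemma even_det_same_parity u v : vertex u -> vertex v ->
  Z.even (det u v) = true ->
  Z.even (fst u) = Z.even (fst v) /\ Z.even (snd u) = Z.even (snd v).
Proof.
  unfold det; rewrite Z.even_sub, !Z.even_mul.
  intros Hu%vertex_not_both_even Hv%vertex_not_both_even.
  destruct (Z.even (fst u)), (Z.even (snd u)), (Z.even (fst v)), (Z.even (snd v));
    simpl; intuition congruence.
Qed.

Lemma even_dist_no_triangle k u v w : 0 < k -> Z.even k = true ->
  vertex u -> vertex v -> vertex w ->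
  dist u v = k -> dist u w = k -> dist v w = k -> False.
Proof.
  intros Hk Hkeven Hu Hv Hw Huv Huw Hvw.
  destruct (equidistant_triple k u v w) as (a & b & Ha & Hb & W1 & W2); auto.
  assert (Hdet : Z.even (det u v) = true).
  { rewrite dist_det in Huv.
    destruct (abs_eq_sign_mul _ _ Hk Huv) as (e & _ & ->).
    rewrite Z.even_mul, Hkeven; apply orb_true_r. }
  destruct (even_det_same_parity u v Hu Hv Hdet) as [P1 P2].
  assert (Pa : Z.even a = false) by (assert (a = 1 \/ a = -1) as [-> | ->] by lia; reflexivity).
  assert (Pb : Z.even b = false) by (assert (b = 1 \/ b = -1) as [-> | ->] by lia; reflexivity).
  apply vertex_not_both_even in Hw.
  rewrite W1, W2, !Z.even_add, !Z.even_mul, Pa, Pb, P1, P2 in Hw.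
  destruct (Z.even (fst v)), (Z.even (snd v)); simpl in Hw; intuition discriminate.
Qed.

Lemma det_lin_comb a b c d u v :
  det (a * fst u + b * fst v, a * snd u + b * snd v)
      (c * fst u + d * fst v, c * snd u + d * snd v)
  = (a * d - b * c) * det u v.
Proof. unfold det; simpl; ring. Qed.

Lemma no_equidistant_quadruple k u v w x : 0 < k ->
  dist u v = k -> dist u w = k -> dist u x = k ->
  dist v w = k -> dist v x = k -> dist w x = k -> False.
Proof.
  intros Hk Huv Huw Hux Hvw Hvx Hwx.
  destruct (equidistant_triple k u v w) as (a & b & Ha & Hb & W1 & W2); auto.
  destruct (equidistant_triple k u v x) as (c & d & Hc & Hd & X1 & X2); auto.
  destruct w as [w1 w2], x as [x1 x2]; simpl in W1, W2, X1, X2; subst w1 w2 x1 x2.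
  rewrite dist_det, det_lin_comb, Z.abs_mul, <- dist_det, Huv in Hwx.
  assert (Z.abs (a * d - b * c) = 0 \/ Z.abs (a * d - b * c) = 2) as [E | E]
    by (assert (a = 1 \/ a = -1) as [-> | ->] by lia;
        assert (b = 1 \/ b = -1) as [-> | ->] by lia;
        assert (c = 1 \/ c = -1) as [-> | ->] by lia;
        assert (d = 1 \/ d = -1) as [-> | ->] by lia; lia);
    rewrite E in Hwx; lia.
Qed.

Lemma is_clique_cons k u l :
  is_clique k (u :: l) -> vertex u /\ Forall (adjF k u) l /\ is_clique k l.
Proof.
  intros [Hv Hp]; inversion Hv; inversion Hp; subst; split; [|split; [|split]]; auto.
Qed.

Lemma is_clique_drop_second k u v l :
  is_clique k (u :: v :: l) -> is_clique k (u :: l).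
Proof.
  intros [Hv Hp]; inversion Hv as [|? ? ? Hv']; inversion Hv'; subst.
  inversion Hp as [|? ? Hu Hp']; inversion Hu; inversion Hp'; subst.
  split; constructor; auto.
Qed.

Lemma is_clique_triangle k u v w l : is_clique k (u :: v :: w :: l) ->
  vertex u /\ vertex v /\ vertex w /\
  dist u v = k /\ dist u w = k /\ dist v w = k.
Proof.
  intros (Hu & Fu & (Hv & Fv & (Hw & _ & _)%is_clique_cons)%is_clique_cons)%is_clique_cons.
  destruct (Forall_inv Fu) as (_ & _ & _ & Duv).
  destruct (Forall_inv (Forall_inv_tail Fu)) as (_ & _ & _ & Duw).
  destruct (Forall_inv Fv) as (_ & _ & _ & Dvw).
  repeat split; assumption.
Qed.

Lemma even_clique_length_le_2 k l : 0 < k -> Z.even k = true ->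
  is_clique k l -> (length l <= 2)%nat.
Proof.
  intros Hk Hkeven Hl; destruct l as [|u [|v [|w l]]]; simpl; try lia; exfalso.
  destruct (is_clique_triangle _ _ _ _ _ Hl) as (Hu & Hv & Hw & Duv & Duw & Dvw).
  exact (even_dist_no_triangle k u v w Hk Hkeven Hu Hv Hw Duv Duw Dvw).
Qed.

Lemma clique_length_le_3 k l : 0 < k -> is_clique k l -> (length l <= 3)%nat.
Proof.
  intros Hk Hl; destruct l as [|u [|v [|w [|x l]]]]; simpl; try lia; exfalso.
  destruct (is_clique_triangle _ _ _ _ _ Hl) as (_ & _ & _ & Duv & Duw & Dvw).
  destruct (is_clique_triangle _ _ _ _ _ (proj2 (proj2 (is_clique_cons _ _ _ Hl))))
    as (_ & _ & _ & _ & Dvx & Dwx).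
  destruct (is_clique_triangle _ _ _ _ _ (is_clique_drop_second _ _ _ _ Hl))
    as (_ & _ & _ & _ & Dux & _).
  exact (no_equidistant_quadruple k u v w x Hk Duv Duw Dux Dvw Dvx Dwx).
Qed.

Lemma vertex_1_q q : vertex (1, q).
Proof. apply Z.gcd_1_l. Qed.

Lemma vertex_2_odd q : Z.odd q = true -> vertex (2, q).
Proof.
  intros [m ->]%Z.odd_spec; unfold vertex; cbn [fst snd].
  rewrite Z.add_comm, Z.mul_comm, Z.gcd_add_mult_diag_r; reflexivity.
Qed.

Lemma not_same_vertex p q r s : (p, q) <> (r, s) -> (p <> - r \/ q <> - s) ->
  ~ same_vertex (p, q) (r, s).
Proof. intros H1 H2 [E | [E1 E2]]; cbn [fst snd] in *; [congruence | lia]. Qed.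

Ltac solve_adjacency :=
  try apply not_same_vertex; unfold dist; cbn [fst snd];
  try (intros E; injection E); lia.

Lemma clique_pair k : 0 < k -> is_clique k [(1, 0); (1, k)].
Proof.
  intros Hk; pose proof (vertex_1_q 0); pose proof (vertex_1_q k).
  split; repeat constructor; auto; solve_adjacency.
Qed.

Lemma odd_clique_triple k : 0 < k -> Z.odd k = true ->
  is_clique k [(1, 0); (1, k); (2, k)].
Proof.
  intros Hk Hkodd.
  pose proof (vertex_1_q 0); pose proof (vertex_1_q k); pose proof (vertex_2_odd k Hkodd).
  split; repeat constructor; auto; solve_adjacency.
Qed.

Theorem lemma2p3 (k : Z) (hk : 0 < k) :
  clique_number k (if Z.even k then 2%nat else 3%nat).
Proof.
  destruct (Z.even k) eqn:Hkeven; split.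
  - exists [(1, 0); (1, k)]; split; [apply clique_pair|]; auto.
  - intros l; apply even_clique_length_le_2; auto.
  - exists [(1, 0); (1, k); (2, k)]; split; [apply odd_clique_triple|]; auto.
    rewrite <- Z.negb_even, Hkeven; reflexivity.
  - intros l; apply clique_length_le_3; auto.
Qed.
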